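(* Let $H(x|t)$ and $E(x|t)$ be the row-to-row transfer matrices defined in the context. Then for independent spectral parameters $x,x'$: $$H(x)H(x')=H(x')H(x),\qquad E(x)E(x')=E(x')E(x),\qquad H(x)E(x')=E(x')H(x).$$ In particular, the operators $Z_n(x_1,\dots,x_n|t)=H(x_n|t)\cdots H(x_1|t)$ and $Z'_k(x_1,\dots,x_k|t)=E(x_k|t)\cdots E(x_1|t)$ are symmetric in the $x$-variables.
   Context: $\beta$ indeterminate, $x\oplus y=x+y+\beta xy$, $x\ominus y=(x-y)/(1+\beta y)$. $V=\mathbb{Z}v_0\oplus\mathbb{Z}v_1$ with $\sigma^-v_1=v_0,\sigma^-v_0=0,\sigma^+v_0=v_1,\sigma^+v_1=0$. The quantum space is $\mathcal{V}=V^{\otimes N}$ (scalars extended to rational functions in $\beta,t_1,\dots,t_N$, spectral parameters, and formal power series in $q$). For an auxiliary copy $V(x)$ and the $j$-th tensor factor of $\mathcal{V}$ define $L_j(x)=\sum_{a,b}e_{ab}\otimes L_{ab}$ with $L_{00}=\sigma^+\sigma^-+(x\ominus t_j)\sigma^-\sigma^+$, $L_{01}=(1+\beta\,x\ominus t_j)\sigma^+$, $L_{10}=\sigma^-$, $L_{11}=\sigma^-\sigma^+$ (the $\sigma$'s acting on the $j$-th factor, $e_{ab}v_b=v_a$ the matrix units on $V(x)$), and $L'_j(x)$ with $L'_{00}=\sigma^-\sigma^++(x\oplus t_j)\sigma^+\sigma^-$, $L'_{01}=\sigma^+$, $L'_{10}=(1+\beta\,x\oplus t_j)\sigma^-$,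 $L'_{11}=\sigma^+\sigma^-$. The monodromy matrix is $M(x|t)=L_N(x)\cdots L_2(x)L_1(x)=\sum_{a,b}e_{ab}\otimes M_{ab}$ and $A=M_{00},B=M_{01},C=M_{10},D=M_{11}\in\mathrm{End}\,\mathcal{V}$; $A',B',C',D'$ are defined likewise from $L'$. The transfer matrices are $H(x|t)=A(x|t)+qD(x|t)$ and $E(x|t)=A'(x|t)+qD'(x|t)$. *)

From mathcomp Require Import all_boot all_order all_algebra all_fingroup.
Set Implicit Arguments. Unset Strict Implicit. Unset Printing Implicit Defensive.
Import GRing.Theory.
Local Open Scope ring_scope.

Section Transfer.
Variable F : fieldType.
Variable N : nat.

(* Basis states of V^{(x)N}: s j = 0 means v_0 at factor j, 1 means v_1. *)
Definition state := {ffun 'I_N -> 'I_2}.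
Definition dimV := #|{: state}|.
Definition op := 'M[F]_dimV.

(* the 2x2 matrix m acting on the j-th tensor factor (identity elsewhere);
   matrix entries indexed by (enum_val) basis states *)
Definition st (i : 'I_dimV) : state := enum_val (A := {: state}) i.

Definition loc (j : 'I_N) (m : 'M[F]_2) : op :=
  \matrix_(i, i') (m (st i j) (st i' j) *
     ([forall k : 'I_N, (k != j) ==> (st i k == st i' k)])%:R).

(* sigma^- v_1 = v_0, sigma^+ v_0 = v_1 *)
Definition sigm : 'M[F]_2 := \matrix_(a, b) ((a == 0) && (b == 1))%:R.
Definition sigp : 'M[F]_2 := \matrix_(a, b) ((a == 1) && (b == 0))%:R.

Definition oplus (beta x y : F) := x + y + beta * x * y.
Definition ominus (beta x y : F) := (x - y) / (1 + beta * y).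

(* 2x2 matrices (auxiliary space) with operator entries *)
Definition mono := 'I_2 -> 'I_2 -> op.
Definition mono_mul (P Q : mono) : mono := fun a b => \sum_(c < 2) P a c *m Q c b.
Definition mono_id : mono := fun a b => ((a == b)%:R)%:M.

Definition Lop (beta : F) (t : 'I_N -> F) (x : F) (j : 'I_N) : mono :=
  fun a b =>
  let y := ominus beta x (t j) in
  if (a == 0) && (b == 0) then loc j (sigp *m sigm + y *: (sigm *m sigp))
  else if (a == 0) && (b == 1) then loc j ((1 + beta * y) *: sigp)
  else if (a == 1) && (b == 0) then loc j sigm
  else loc j (sigm *m sigp).

Definition Lop' (beta : F) (t : 'I_N -> F) (x : F) (j : 'I_N) : mono :=
  fun a b =>
  let y := oplus beta x (t j) in
  if (a == 0) && (b == 0) then loc j (sigm *m sigp + y *: (sigp *m sigm))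
  else if (a == 0) && (b == 1) then loc j sigp
  else if (a == 1) && (b == 0) then loc j ((1 + beta * y) *: sigm)
  else loc j (sigp *m sigm).

(* M = L_N ... L_2 L_1 : folding over j = 1..N, each new factor multiplied on the left *)
Definition monodromy (L : 'I_N -> mono) : mono :=
  foldl (fun acc j => mono_mul (L j) acc) mono_id (enum 'I_N).

(* H = A + q D,  E = A' + q D' *)
Definition Hop (beta q : F) (t : 'I_N -> F) (x : F) : op :=
  let M := monodromy (Lop beta t x) in M 0 0 + q *: M 1 1.
Definition Eop (beta q : F) (t : 'I_N -> F) (x : F) : op :=
  let M := monodromy (Lop' beta t x) in M 0 0 + q *: M 1 1.

(* T(x_n) ... T(x_1) *)
Definition opprod (T : F -> op) (n : nat) (xs : 'I_n -> F) : op :=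
  foldl (fun acc i => T (xs i) *m acc) 1%:M (enum 'I_n).

Definition Zop beta q t (n : nat) (xs : 'I_n -> F) := opprod (Hop beta q t) xs.
Definition Zop' beta q t (n : nat) (xs : 'I_n -> F) := opprod (Eop beta q t) xs.

End Transfer.

From HB Require Import structures.
From mathcomp Require Import all_boot all_order all_algebra all_fingroup.
From mathcomp Require Import ring.
Set Implicit Arguments. Unset Strict Implicit. Unset Printing Implicit Defensive.
Import GRing.Theory.
Local Open Scope ring_scope.

(* Each pair of local L-operators satisfies an RLL relation with an explicit R-matrix of
   six-vertex shape (r0 on v0(x)v0, r3 on v1(x)v1, a 2x2 block B on the mixed sector).
   Since L-operators at different sites commute, the train argument lifts these to RTT
   relations for the monodromy matrices, whose (00,00), (11,11) and mixed-sector
   components give r0 [A, A'] = 0, r3 [D, D'] = 0 and det B ([A, D'] + [D, A']) = 0,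
   hence c [H(x), H(x')] = 0 for an explicit scalar c (likewise for E and for H, E).
   The scalar c vanishes at special spectral parameters, so the relations are proved over
   an arbitrary commutative ring and applied over F[e]/(e^3) to perturbed parameters, where
   c is a nonzero jet; its lowest nonzero coefficient then forces the commutator at e = 0
   to vanish. *)

Section RingOperators.
Variables (R : comNzRingType) (N : nat).

Definition agree_off (j : 'I_N) (u v : state N) :=
  [forall k : 'I_N, (k != j) ==> (u k == v k)].

Definition opR := 'M[R]_(dimV N).
Definition locR (j : 'I_N) (m : 'M[R]_2) : opR :=
  \matrix_(i, i') (m (st i j) (st i' j) * (agree_off j (st i) (st i'))%:R).
Definition sigmR : 'M[R]_2 := \matrix_(a, b) ((a == 0) && (b == 1))%:R.
Definition sigpR : 'M[R]_2 := \matrix_(a, b) ((a == 1) && (b == 0))%:R.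

Definition monoR := 'I_2 -> 'I_2 -> opR.
Definition mono_mulR (P Q : monoR) : monoR := fun a b => \sum_(c < 2) P a c *m Q c b.
Definition mono_idR : monoR := fun a b => ((a == b)%:R)%:M.

(* The site parameter [y j] replaces [x ominus t_j] (resp. [x oplus t_j]): over a field,
   [Hop beta q t x] is convertible to [HopR beta q (fun j => ominus beta x (t j))],
   and similarly for [Eop]. *)
Definition LopR (beta : R) (y : 'I_N -> R) (j : 'I_N) : monoR :=
  fun a b =>
  if (a == 0) && (b == 0) then locR j (sigpR *m sigmR + y j *: (sigmR *m sigpR))
  else if (a == 0) && (b == 1) then locR j ((1 + beta * y j) *: sigpR)
  else if (a == 1) && (b == 0) then locR j sigmR
  else locR j (sigmR *m sigpR).
Definition Lop'R (beta : R) (y : 'I_N -> R) (j : 'I_N) : monoR :=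
  fun a b =>
  if (a == 0) && (b == 0) then locR j (sigmR *m sigpR + y j *: (sigpR *m sigmR))
  else if (a == 0) && (b == 1) then locR j sigpR
  else if (a == 1) && (b == 0) then locR j ((1 + beta * y j) *: sigmR)
  else locR j (sigpR *m sigmR).

Definition monodromyR (L : 'I_N -> monoR) (s : seq 'I_N) : monoR :=
  foldl (fun acc j => mono_mulR (L j) acc) mono_idR s.

Definition HopR beta q y : opR :=
  let M := monodromyR (LopR beta y) (enum 'I_N) in M 0 0 + q *: M 1 1.
Definition EopR beta q y : opR :=
  let M := monodromyR (Lop'R beta y) (enum 'I_N) in M 0 0 + q *: M 1 1.

End RingOperators.

Section LocalOperators.
Variables (R : comNzRingType) (N : nat).
Local Notation state := (state N).
Local Notation locR := (@locR R N).

Lemma sum_st (G : state -> R) : \sum_(k < dimV N) G (st k) = \sum_(s : state) G s.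
Proof.
rewrite (reindex (@enum_rank _)) /=; last by apply: onW_bij; exact: enum_rank_bij.
by apply: eq_bigr => s _; rewrite /st enum_rankK.
Qed.

Lemma sum_agree_off (u : state) j (G : 'I_2 -> R) :
  \sum_(s : state) G (s j) * (agree_off j u s)%:R = \sum_(c < 2) G c.
Proof.
rewrite (partition_big (fun s : state => s j) predT) //=.
apply: eq_bigr => c _.
pose uc : state := [ffun k => if k == j then c else u k].
rewrite (bigD1 uc) /=; last by rewrite ffunE eqxx.
rewrite big1 ?addr0.
  have -> : agree_off j u uc.
    by apply/forallP => k; apply/implyP => hk; rewrite ffunE (negbTE hk).
  by rewrite ffunE eqxx mulr1.
move=> s /andP [/eqP hsj hne].
case e: (agree_off j u s); last by rewrite mulr0.
case/eqP: hne; apply/ffunP => k; rewrite ffunE.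
case: eqP => [->|/eqP hk] //.
by move/forallP: e => /(_ k); rewrite hk /= => /eqP.
Qed.

Lemma agree_off_trans (j : 'I_N) u v w :
  agree_off j u v -> agree_off j v w = agree_off j u w.
Proof.
move=> /forallP h; apply/forallP/forallP => h2 k; apply/implyP => hk.
  by move: (h k) (h2 k); rewrite hk /= => /eqP ->.
by move: (h k) (h2 k); rewrite hk /= => /eqP <-.
Qed.

Lemma locR_mul j a b : locR j a *m locR j b = locR j (a *m b).
Proof.
apply/matrixP => i i'; rewrite !mxE.
under eq_bigr => k _ do rewrite !mxE.
rewrite (sum_st (fun s => a (st i j) (s j) * (agree_off j (st i) s)%:R *
                          (b (s j) (st i' j) * (agree_off j s (st i'))%:R))).
transitivity (\sum_(s : state) a (st i j) (s j) * b (s j) (st i' j) *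
                 (agree_off j (st i) (st i'))%:R * (agree_off j (st i) s)%:R).
  apply: eq_bigr => s _.
  case e: (agree_off j (st i) s); last by rewrite !mulr0 mul0r.
  by rewrite (agree_off_trans _ e); ring.
rewrite (sum_agree_off (st i) j (fun c => a (st i j) c * b c (st i' j) *
                                          (agree_off j (st i) (st i'))%:R)).
by rewrite -big_distrl.
Qed.

Definition agree_off2 j k (u v : state) :=
  [forall l : 'I_N, ((l != j) && (l != k)) ==> (u l == v l)].

Lemma agree_off_split j k s u v : j != k -> agree_off j u s ->
  agree_off k s v = (s j == v j) && agree_off2 j k u v.
Proof.
move=> hjk /forallP hus; apply/idP/idP.
  move/forallP => h; apply/andP; split; first by move: (h j); rewrite hjk.
  apply/forallP => l; apply/implyP => /andP [hl1 hl2].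
  by move: (hus l) (h l); rewrite hl1 hl2 /= => /eqP -> .
move=> /andP [/eqP hj /forallP h]; apply/forallP => l; apply/implyP => hl2.
case: (eqVneq l j) => [->|hl1]; first by rewrite hj.
by move: (hus l) (h l); rewrite hl1 hl2 /= => /eqP <-.
Qed.

Lemma locR_mul_neq j k a b : j != k ->
  locR j a *m locR k b = \matrix_(i, i') (a (st i j) (st i' j) *
    b (st i k) (st i' k) * (agree_off2 j k (st i) (st i'))%:R).
Proof.
move=> hjk; apply/matrixP => i i'; rewrite !mxE.
under eq_bigr => l _ do rewrite !mxE.
rewrite (sum_st (fun s => a (st i j) (s j) * (agree_off j (st i) s)%:R *
                          (b (s k) (st i' k) * (agree_off k s (st i'))%:R))).
pose G c := a (st i j) c * b (st i k) (st i' k) * (c == st i' j)%:R *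
            (agree_off2 j k (st i) (st i'))%:R.
transitivity (\sum_(s : state) G (s j) * (agree_off j (st i) s)%:R).
  apply: eq_bigr => s _.
  case e: (agree_off j (st i) s); last by rewrite !mulr0 mul0r.
  have -> : s k = st i k.
    by move/forallP: e => /(_ k); rewrite eq_sym hjk /= => /eqP.
  by rewrite (agree_off_split _ hjk e) -mulnb natrM /G; ring.
rewrite sum_agree_off (bigD1 (st i' j)) //= big1 ?addr0; first by rewrite /G eqxx mulr1.
by move=> c /negbTE hc; rewrite /G hc mulr0 mul0r.
Qed.

Lemma locR_comm j k a b : j != k -> locR j a *m locR k b = locR k b *m locR j a.
Proof.
move=> hjk; have hkj : k != j by rewrite eq_sym.
rewrite (locR_mul_neq _ _ hjk) (locR_mul_neq _ _ hkj).
apply/matrixP => i i'; rewrite !mxE (mulrC (a _ _)).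
by congr (_ * (_ : bool)%:R); apply: eq_forallb => l; rewrite andbC.
Qed.

Lemma locRZ j c a : locR j (c *: a) = c *: locR j a.
Proof. by apply/matrixP => i i'; rewrite !mxE mulrA. Qed.

Lemma locR_sum j (I : finType) (G : I -> 'M[R]_2) :
  locR j (\sum_i G i) = \sum_i locR j (G i).
Proof.
apply: (big_morph _ _ _) => [a b|]; apply/matrixP => i i'; rewrite !mxE ?mulrDl //.
by rewrite mul0r.
Qed.

End LocalOperators.

Section RTT.
Variables (R : comNzRingType) (N : nat).
Local Notation opR := (opR R N).
Local Notation monoR := (monoR R N).
Local Notation locR := (@locR R N).
Local Notation monodromyR := (@monodromyR R N).
Local Notation mono_mulR := (@mono_mulR R N).
Local Notation mono_idR := (@mono_idR R N).

(* Indices of the doubled auxiliary space [V(x) (x) V(x')]. *)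
Definition idx2 := ('I_2 * 'I_2)%type.

Definition tens (P Q : monoR) (A B : idx2) : opR := P A.1 B.1 *m Q A.2 B.2.
Definition tens_rev (P Q : monoR) (A B : idx2) : opR := Q A.2 B.2 *m P A.1 B.1.
Definition lscale4 (Rm : idx2 -> idx2 -> R) (X : idx2 -> idx2 -> opR) A B :=
  \sum_(C : idx2) Rm A C *: X C B.
Definition rscale4 (X : idx2 -> idx2 -> opR) (Rm : idx2 -> idx2 -> R) A B :=
  \sum_(C : idx2) Rm C B *: X A C.
Definition mul4 (X Y : idx2 -> idx2 -> opR) A B := \sum_(C : idx2) X A C *m Y C B.

Definition RTT Rm P Q := forall A B, lscale4 Rm (tens P Q) A B = rscale4 (tens_rev P Q) Rm A B.

Definition site_local (L : 'I_N -> monoR) := forall k a b, exists m, L k a b = locR k m.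

Lemma monodromyR_rcons L s k :
  monodromyR L (rcons s k) = mono_mulR (L k) (monodromyR L s).
Proof. by rewrite /monodromyR foldl_rcons. Qed.

Lemma monodromyR_comm L s j m : site_local L -> j \notin s ->
  forall a b, monodromyR L s a b *m locR j m = locR j m *m monodromyR L s a b.
Proof.
move=> hL; elim/last_ind: s => [|s k IH] hj a b.
  by rewrite /monodromyR /= /mono_idR scalar_mxC.
rewrite monodromyR_rcons /mono_mulR mulmx_suml mulmx_sumr.
move: hj; rewrite -cats1 mem_cat inE negb_or => /andP [hjs hjk].
apply: eq_bigr => c _; have [m' ->] := hL k a c.
by rewrite -mulmxA IH // !mulmxA locR_comm // eq_sym.
Qed.

Lemma sum_idx2 (V : nmodType) (G : idx2 -> V) :
  \sum_(C : idx2) G C = \sum_(c1 < 2) \sum_(c2 < 2) G (c1, c2).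
Proof. by rewrite pair_bigA; apply: eq_bigr => -[]. Qed.

Lemma tens_mono_mul L1 L2 P Q :
  (forall a b c d, P a b *m L2 c d = L2 c d *m P a b) ->
  forall A B, tens (mono_mulR L1 P) (mono_mulR L2 Q) A B = mul4 (tens L1 L2) (tens P Q) A B.
Proof.
move=> hc A B; rewrite /tens /mul4 /mono_mulR sum_idx2 mulmx_suml.
apply: eq_bigr => c1 _; rewrite mulmx_sumr; apply: eq_bigr => c2 _ /=.
by rewrite !mulmxA -(mulmxA (L1 _ _)) hc !mulmxA.
Qed.

Lemma tens_rev_mono_mul L1 L2 P Q :
  (forall a b c d, Q a b *m L1 c d = L1 c d *m Q a b) ->
  forall A B, tens_rev (mono_mulR L1 P) (mono_mulR L2 Q) A B =
              mul4 (tens_rev L1 L2) (tens_rev P Q) A B.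
Proof.
move=> hc A B; rewrite /tens_rev /mul4 /mono_mulR sum_idx2 mulmx_suml exchange_big /=.
apply: eq_bigr => c1 _; rewrite mulmx_sumr; apply: eq_bigr => c2 _ /=.
by rewrite !mulmxA -(mulmxA (L2 _ _)) hc !mulmxA.
Qed.

Lemma lscale4_mul4 Rm X Y A B : lscale4 Rm (mul4 X Y) A B = mul4 (lscale4 Rm X) Y A B.
Proof.
rewrite /lscale4 /mul4; under eq_bigr => C _ do rewrite scaler_sumr.
rewrite exchange_big /=; apply: eq_bigr => D _.
by rewrite mulmx_suml; apply: eq_bigr => C _; rewrite scalemxAl.
Qed.

Lemma mul4_rscale4 X Rm Y A B : mul4 (rscale4 X Rm) Y A B = mul4 X (lscale4 Rm Y) A B.
Proof.
rewrite /lscale4 /mul4 /rscale4; under eq_bigr => C _ do rewrite mulmx_suml.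
rewrite exchange_big /=; apply: eq_bigr => D _.
by rewrite mulmx_sumr; apply: eq_bigr => C _; rewrite -scalemxAl scalemxAr.
Qed.

Lemma rscale4_mul4 X Y Rm A B : rscale4 (mul4 X Y) Rm A B = mul4 X (rscale4 Y Rm) A B.
Proof.
rewrite /rscale4 /mul4; under eq_bigr => C _ do rewrite scaler_sumr.
rewrite exchange_big /=; apply: eq_bigr => D _.
by rewrite mulmx_sumr; apply: eq_bigr => C _; rewrite scalemxAr.
Qed.

Lemma eq_mul4 X X' Y Y' :
  (forall A B, X A B = X' A B) -> (forall A B, Y A B = Y' A B) ->
  forall A B, mul4 X Y A B = mul4 X' Y' A B.
Proof. by move=> hX hY A B; apply: eq_bigr => C _; rewrite hX hY. Qed.

Lemma RTT_mono_id Rm : RTT Rm mono_idR mono_idR.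
Proof.
have tensE (C B : idx2) : tens mono_idR mono_idR C B = ((C == B)%:R)%:M
                       /\ tens_rev mono_idR mono_idR C B = ((C == B)%:R)%:M.
  case: C B => [c1 c2] [b1 b2]; rewrite /tens /tens_rev /mono_idR /= -!scalar_mxM xpair_eqE.
  by case: (c1 == b1); case: (c2 == b2); rewrite ?mulr1 ?mulr0 ?mul0r.
move=> A B; rewrite /lscale4 /rscale4 [LHS](bigD1 B) // [RHS](bigD1 A) //=.
rewrite [X in _ + X]big1 ?[X in _ = _ + X]big1 ?addr0.
- by rewrite (tensE B B).1 (tensE A A).2 !eqxx.
- by move=> C /negbTE hC; rewrite (tensE A C).2 eq_sym hC scale_scalar_mx mulr0 raddf0.
- by move=> C /negbTE hC; rewrite (tensE C B).1 hC scale_scalar_mx mulr0 raddf0.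
Qed.

Lemma RTT_monodromy Rm L1 L2 s : site_local L1 -> site_local L2 ->
  (forall j, RTT Rm (L1 j) (L2 j)) -> uniq s ->
  RTT Rm (monodromyR L1 s) (monodromyR L2 s).
Proof.
move=> h1 h2 hR; elim/last_ind: s => [|s k IH]; first by move=> _; exact: RTT_mono_id.
rewrite rcons_uniq => /andP [hk hs] A B.
have hcP a b c d : monodromyR L1 s a b *m L2 k c d = L2 k c d *m monodromyR L1 s a b.
  by have [m ->] := h2 k c d; exact: monodromyR_comm.
have hcQ a b c d : monodromyR L2 s a b *m L1 k c d = L1 k c d *m monodromyR L2 s a b.
  by have [m ->] := h1 k c d; exact: monodromyR_comm.
rewrite !monodromyR_rcons.
transitivity (lscale4 Rm (mul4 (tens (L1 k) (L2 k)) (tens (monodromyR L1 s) (monodromyR L2 s))) A B).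
  by apply: eq_bigr => C _; rewrite tens_mono_mul.
rewrite lscale4_mul4 (eq_mul4 (hR k) (fun _ _ => erefl)) mul4_rscale4.
rewrite (eq_mul4 (fun _ _ => erefl) (IH hs)) -rscale4_mul4.
by apply: eq_bigr => C _; rewrite tens_rev_mono_mul.
Qed.

End RTT.

Lemma ord2_case (P : 'I_2 -> Prop) : P ord0 -> P ord_max -> forall i, P i.
Proof.
move=> h0 h1 [[|[|//]] hi].
  by have -> : Ordinal hi = ord0 by apply: val_inj.
by have -> : Ordinal hi = ord_max by apply: val_inj.
Qed.

Lemma sum_idx2E (V : nmodType) (G : idx2 -> V) : \sum_(C : idx2) G C =
  G (ord0, ord0) + G (ord0, ord_max) + G (ord_max, ord0) + G (ord_max, ord_max).
Proof.
rewrite sum_idx2 !big_ord_recl !big_ord0 !addr0 addrA.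
by have -> : lift ord0 ord0 = ord_max :> 'I_2 by apply: val_inj.
Qed.

Lemma det_mul_trace_intertwine (R : comNzRingType)
    (b11 b12 b21 b22 x11 x12 x21 x22 y11 y12 y21 y22 : R) :
  b11 * x11 + b12 * x21 = b11 * y11 + b21 * y12 ->
  b11 * x12 + b12 * x22 = b12 * y11 + b22 * y12 ->
  b21 * x11 + b22 * x21 = b11 * y21 + b21 * y22 ->
  b21 * x12 + b22 * x22 = b12 * y21 + b22 * y22 ->
  (b11 * b22 - b12 * b21) * (x11 + x22 - y11 - y22) = 0.
Proof.
move=> e1 e2 e3 e4.
transitivity (b22 * ((b11 * x11 + b12 * x21) - (b11 * y11 + b21 * y12))
            - b21 * ((b11 * x12 + b12 * x22) - (b12 * y11 + b22 * y12))
            - b12 * ((b21 * x11 + b22 * x21) - (b11 * y21 + b21 * y22))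
            + b11 * ((b21 * x12 + b22 * x22) - (b12 * y21 + b22 * y22))); first by ring.
by rewrite e1 e2 e3 e4 !subrr !mulr0 !subr0 addr0.
Qed.

Section RTTComponents.
Variables (R : comNzRingType) (N : nat).
Local Notation opR := (opR R N).
Local Notation monoR := (monoR R N).

Definition Rblock (r0 r3 b11 b12 b21 b22 : R) (A C : idx2) : R :=
  match nat_of_ord A.1, nat_of_ord A.2, nat_of_ord C.1, nat_of_ord C.2 with
  | 0, 0, 0, 0 => r0 | 1, 1, 1, 1 => r3
  | 0, 1, 0, 1 => b11 | 0, 1, 1, 0 => b12
  | 1, 0, 0, 1 => b21 | 1, 0, 1, 0 => b22
  | _, _, _, _ => 0 end.

Lemma RTT_Rblock_comm r0 r3 b11 b12 b21 b22 (P Q : monoR) :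
  RTT (Rblock r0 r3 b11 b12 b21 b22) P Q ->
  [/\ r0 *: (P 0 0 *m Q 0 0 - Q 0 0 *m P 0 0) = 0,
      r3 *: (P 1 1 *m Q 1 1 - Q 1 1 *m P 1 1) = 0 &
      (b11 * b22 - b12 * b21) *:
        (P 0 0 *m Q 1 1 + P 1 1 *m Q 0 0 - Q 1 1 *m P 0 0 - Q 0 0 *m P 1 1) = 0].
Proof.
have -> : 0 = ord0 :> 'I_2 by apply: val_inj.
have -> : 1 = ord_max :> 'I_2 by apply: val_inj.
move=> h; have e00 := h (ord0, ord0) (ord0, ord0).
have e33 := h (ord_max, ord_max) (ord_max, ord_max).
have e11 := h (ord0, ord_max) (ord0, ord_max); have e12 := h (ord0, ord_max) (ord_max, ord0).
have e21 := h (ord_max, ord0) (ord0, ord_max); have e22 := h (ord_max, ord0) (ord_max, ord0).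
rewrite /lscale4 /rscale4 !sum_idx2E /Rblock /tens /tens_rev /= !scale0r ?addr0 ?add0r
  in e00 e33 e11 e12 e21 e22.
split; [by rewrite scalerBr e00 subrr | by rewrite scalerBr e33 subrr |].
apply/matrixP => i j; rewrite !mxE.
move: e11 e12 e21 e22 => /(congr1 (fun M : opR => M i j)) e11 /(congr1 (fun M : opR => M i j)) e12
  /(congr1 (fun M : opR => M i j)) e21 /(congr1 (fun M : opR => M i j)) e22.
rewrite !mxE in e11 e12 e21 e22.
exact: det_mul_trace_intertwine e11 e12 e21 e22.
Qed.

Lemma scaled_transfer_comm (A D A' D' : opR) (q c : R) :
  c *: (A *m A' - A' *m A) = 0 -> c *: (D *m D' - D' *m D) = 0 ->
  c *: (A *m D' + D *m A' - D' *m A - A' *m D) = 0 ->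
  c *: ((A + q *: D) *m (A' + q *: D') - (A' + q *: D') *m (A + q *: D)) = 0.
Proof.
move=> h0 h3 h1.
have -> : (A + q *: D) *m (A' + q *: D') - (A' + q *: D') *m (A + q *: D) =
   (A *m A' - A' *m A) + q *: (A *m D' + D *m A' - D' *m A - A' *m D) +
   (q * q) *: (D *m D' - D' *m D).
  rewrite !mulmxDl !mulmxDr -!scalemxAl -!scalemxAr !scalerA.
  apply/matrixP => i j; rewrite !mxE; ring.
move: h0 h1 h3; set X0 := _ - A' *m A; set X1 := _ - A' *m D; set X3 := _ - D' *m D.
clearbody X0 X1 X3 => h0 h1 h3.
by rewrite !scalerDr h0 !scalerA !(mulrC c) -!scalerA h1 h3 !scaler0 !addr0.
Qed.

End RTTComponents.

Section LocalRLL.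
Variable R : comNzRingType.

(* The auxiliary entries [L_ac] of [LopR] and [Lop'R] as 2x2 matrices on one tensor
   factor. *)
Definition LH (b y : R) (a c : 'I_2) : 'M[R]_2 := \matrix_(i, k)
  match nat_of_ord a, nat_of_ord c, nat_of_ord i, nat_of_ord k with
  | 0, 0, 0, 0 => y | 0, 0, 1, 1 => 1 | 0, 1, 1, 0 => 1 + b * y
  | 1, 0, 0, 1 => 1 | 1, 1, 0, 0 => 1 | _, _, _, _ => 0 end.
Definition LH' (b y : R) (a c : 'I_2) : 'M[R]_2 := \matrix_(i, k)
  match nat_of_ord a, nat_of_ord c, nat_of_ord i, nat_of_ord k with
  | 0, 0, 0, 0 => 1 | 0, 0, 1, 1 => y | 0, 1, 1, 0 => 1
  | 1, 0, 0, 1 => 1 + b * y | 1, 1, 1, 1 => 1 | _, _, _, _ => 0 end.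

Definition RLL (Rm : idx2 -> idx2 -> R) (m1 m2 : 'I_2 -> 'I_2 -> 'M[R]_2) :=
  forall A B : idx2, \sum_(C : idx2) Rm A C *: (m1 C.1 B.1 *m m2 C.2 B.2) =
                     \sum_(C : idx2) Rm C B *: (m2 A.2 C.2 *m m1 A.1 C.1).

Ltac RLL_by_cases :=
  intros A B; rewrite !sum_idx2E; apply/matrixP; intros i k;
  rewrite !mxE !big_ord_recl !big_ord0 !mxE /Rblock; revert A B i k;
  do 2 (case; elim/ord2_case; elim/ord2_case); do 2 elim/ord2_case; rewrite /=; ring.

Lemma RLL_HH b y y' kp :
  RLL (Rblock (kp * (1 + b * y)) (kp * (1 + b * y)) 0 (kp * (1 + b * y))
              (kp * (1 + b * y')) (kp * (y' - y)))
      (LH b y) (LH b y').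
Proof. RLL_by_cases. Qed.

Lemma RLL_EE b z z' kp :
  RLL (Rblock (kp * (1 + b * z')) (kp * (1 + b * z')) (kp * (z - z'))
              (kp * (1 + b * z')) (kp * (1 + b * z)) 0)
      (LH' b z) (LH' b z').
Proof. RLL_by_cases. Qed.

Lemma RLL_HE b y z :
  RLL (Rblock (y + z + b * y * z) 0 1 (1 + b * (y + z + b * y * z)) 1 1) (LH b y) (LH' b z).
Proof. RLL_by_cases. Qed.

Lemma RLL_EH b y z : RLL (Rblock 0 1 0 0 0 0) (LH' b z) (LH b y).
Proof. RLL_by_cases. Qed.

End LocalRLL.

Section TransferCommutation.
Variables (R : comNzRingType) (N : nat).
Local Notation monoR := (monoR R N).
Local Notation locR := (@locR R N).

Lemma RTT_loc Rm j m1 m2 (P Q : monoR) :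
  (forall a c, P a c = locR j (m1 a c)) -> (forall a c, Q a c = locR j (m2 a c)) ->
  RLL Rm m1 m2 -> RTT Rm P Q.
Proof.
move=> hP hQ h A B; rewrite /lscale4 /rscale4 /tens /tens_rev.
under eq_bigr => C _ do rewrite hP hQ locR_mul -locRZ.
under [RHS]eq_bigr => C _ do rewrite hP hQ locR_mul -locRZ.
by rewrite -!locR_sum h.
Qed.

Ltac ord2 x := case: x => [[|[|//]] ?].

Lemma LopR_loc b (y : 'I_N -> R) j a c : LopR b y j a c = locR j (LH b (y j) a c).
Proof.
rewrite /LopR; ord2 a; ord2 c => /=; congr locR; apply/matrixP => i k; rewrite !mxE;
  ord2 i; ord2 k; rewrite /= ?big_ord_recl ?big_ord0 /= ?mxE /=; ring.
Qed.

Lemma Lop'R_loc b (y : 'I_N -> R) j a c : Lop'R b y j a c = locR j (LH' b (y j) a c).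
Proof.
rewrite /Lop'R; ord2 a; ord2 c => /=; congr locR; apply/matrixP => i k; rewrite !mxE;
  ord2 i; ord2 k; rewrite /= ?big_ord_recl ?big_ord0 /= ?mxE /=; ring.
Qed.

Lemma site_local_LopR b (y : 'I_N -> R) : site_local (LopR b y).
Proof. by move=> k a c; exists (LH b (y k) a c); exact: LopR_loc. Qed.

Lemma site_local_Lop'R b (y : 'I_N -> R) : site_local (Lop'R b y).
Proof. by move=> k a c; exists (LH' b (y k) a c); exact: Lop'R_loc. Qed.

Lemma HopR_comm (b q : R) (y y' : 'I_N -> R) (lam mu nu : R) (kp : 'I_N -> R) :
  (forall j, lam = kp j * (1 + b * y j)) -> (forall j, mu = kp j * (1 + b * y' j)) ->
  (forall j, nu = kp j * (y' j - y j)) ->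
  (lam * mu) *: (HopR b q y *m HopR b q y' - HopR b q y' *m HopR b q y) = 0.
Proof.
move=> hl hm hn.
have hR j : RTT (Rblock lam lam 0 lam mu nu) (LopR b y j) (LopR b y' j).
  apply: RTT_loc (LopR_loc b y j) (LopR_loc b y' j) _.
  by rewrite (hl j) (hm j) (hn j); exact: RLL_HH.
have [h0 h3 h1] := RTT_Rblock_comm (RTT_monodromy (site_local_LopR b y)
                     (site_local_LopR b y') hR (enum_uniq 'I_N)).
apply: scaled_transfer_comm.
- by rewrite mulrC -scalerA h0 scaler0.
- by rewrite mulrC -scalerA h3 scaler0.
- by move: h1; rewrite mul0r sub0r scaleNr => /eqP; rewrite oppr_eq0 => /eqP.
Qed.

Lemma EopR_comm (b q : R) (z z' : 'I_N -> R) (lam mu nu : R) (kp : 'I_N -> R) :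
  (forall j, lam = kp j * (1 + b * z j)) -> (forall j, mu = kp j * (1 + b * z' j)) ->
  (forall j, nu = kp j * (z j - z' j)) ->
  (mu * lam) *: (EopR b q z *m EopR b q z' - EopR b q z' *m EopR b q z) = 0.
Proof.
move=> hl hm hn.
have hR j : RTT (Rblock mu mu nu mu lam 0) (Lop'R b z j) (Lop'R b z' j).
  apply: RTT_loc (Lop'R_loc b z j) (Lop'R_loc b z' j) _.
  by rewrite (hl j) (hm j) (hn j); exact: RLL_EE.
have [h0 h3 h1] := RTT_Rblock_comm (RTT_monodromy (site_local_Lop'R b z)
                     (site_local_Lop'R b z') hR (enum_uniq 'I_N)).
apply: scaled_transfer_comm.
- by rewrite mulrC -scalerA h0 scaler0.
- by rewrite mulrC -scalerA h3 scaler0.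
- by move: h1; rewrite mulr0 sub0r scaleNr => /eqP; rewrite oppr_eq0 => /eqP.
Qed.

(* The R-matrix of the first RTT relation has r3 = 0, so [D D' = D' D] is read off a
   second relation with the two monodromies exchanged. *)
Lemma HopR_EopR_comm (b q : R) (y z : 'I_N -> R) (w : R) :
  (forall j, w = y j + z j + b * y j * z j) ->
  (b * w) *: (HopR b q y *m EopR b q z - EopR b q z *m HopR b q y) = 0.
Proof.
move=> hw.
have hHE j : RTT (Rblock w 0 1 (1 + b * w) 1 1) (LopR b y j) (Lop'R b z j).
  apply: RTT_loc (LopR_loc b y j) (Lop'R_loc b z j) _.
  by rewrite (hw j); exact: RLL_HE.
have hEH j : RTT (Rblock 0 1 0 0 0 0) (Lop'R b z j) (LopR b y j).
  exact: RTT_loc (Lop'R_loc b z j) (LopR_loc b y j) (RLL_EH b (y j) (z j)).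
have [h0 _ h1] := RTT_Rblock_comm (RTT_monodromy (site_local_LopR b y)
                     (site_local_Lop'R b z) hHE (enum_uniq 'I_N)).
have [_ h3 _] := RTT_Rblock_comm (RTT_monodromy (site_local_Lop'R b z)
                     (site_local_LopR b y) hEH (enum_uniq 'I_N)).
apply: scaled_transfer_comm.
- by rewrite -scalerA h0 scaler0.
- by move: h3; rewrite scale1r => /eqP; rewrite subr_eq0 => /eqP ->; rewrite subrr scaler0.
- move: h1; rewrite (_ : 1 * 1 - (1 + b * w) * 1 = - (b * w)); last by ring.
  by rewrite scaleNr => /eqP; rewrite oppr_eq0 => /eqP.
Qed.

End TransferCommutation.

Section RingMorphism.
Variables (R R' : comNzRingType) (f : {rmorphism R -> R'}) (N : nat).

Lemma map_locR j m : map_mx f (@locR R N j m) = locR j (map_mx f m).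
Proof. by apply/matrixP => i k; rewrite !mxE rmorphM rmorph_nat. Qed.

Lemma map_sigmR : map_mx f (sigmR R) = sigmR R'.
Proof. by apply/matrixP => i k; rewrite !mxE rmorph_nat. Qed.

Lemma map_sigpR : map_mx f (sigpR R) = sigpR R'.
Proof. by apply/matrixP => i k; rewrite !mxE rmorph_nat. Qed.

Lemma map_LopR b (y : 'I_N -> R) j a c :
  map_mx f (LopR b y j a c) = LopR (f b) (f \o y) j a c.
Proof.
rewrite /LopR; case: ifP => _; last case: ifP => _; last case: ifP => _;
  by rewrite map_locR ?map_mxD ?map_mxZ ?map_mxM ?map_sigmR ?map_sigpR ?rmorphD ?rmorphM ?rmorph1.
Qed.

Lemma map_Lop'R b (y : 'I_N -> R) j a c :
  map_mx f (Lop'R b y j a c) = Lop'R (f b) (f \o y) j a c.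
Proof.
rewrite /Lop'R; case: ifP => _; last case: ifP => _; last case: ifP => _;
  by rewrite map_locR ?map_mxD ?map_mxZ ?map_mxM ?map_sigmR ?map_sigpR ?rmorphD ?rmorphM ?rmorph1.
Qed.

Lemma map_monodromyR (L : 'I_N -> monoR R N) (L' : 'I_N -> monoR R' N) :
  (forall j a c, map_mx f (L j a c) = L' j a c) ->
  forall s a c, map_mx f (monodromyR L s a c) = monodromyR L' s a c.
Proof.
move=> hL; elim/last_ind => [|s k IH] a c.
  by rewrite /monodromyR /= /mono_idR map_scalar_mx rmorph_nat.
rewrite !monodromyR_rcons /mono_mulR raddf_sum; apply: eq_bigr => d _.
by rewrite /= map_mxM hL IH.
Qed.

Lemma map_HopR b q (y : 'I_N -> R) : map_mx f (HopR b q y) = HopR (f b) (f q) (f \o y).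
Proof. by rewrite /HopR map_mxD map_mxZ !(map_monodromyR (map_LopR b y)). Qed.

Lemma map_EopR b q (y : 'I_N -> R) : map_mx f (EopR b q y) = EopR (f b) (f q) (f \o y).
Proof. by rewrite /EopR map_mxD map_mxZ !(map_monodromyR (map_Lop'R b y)). Qed.

End RingMorphism.

Section Jets.
Variable F : fieldType.

(* [Jet a b c] is [a + b e + c e^2] in [F[e]/(e^3)]. *)
Record jet := Jet { jet0 : F; jet1 : F; jet2 : F }.

Definition jet_tuple (u : jet) := (jet0 u, jet1 u, jet2 u).
Definition tuple_jet (p : F * F * F) := Jet p.1.1 p.1.2 p.2.
Lemma jet_tupleK : cancel jet_tuple tuple_jet. Proof. by case. Qed.
HB.instance Definition _ := Equality.copy jet (can_type jet_tupleK).
HB.instance Definition _ := Choice.copy jet (can_type jet_tupleK).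

Definition jet_add u v := Jet (jet0 u + jet0 v) (jet1 u + jet1 v) (jet2 u + jet2 v).
Definition jet_opp u := Jet (- jet0 u) (- jet1 u) (- jet2 u).
Definition jet_mul u v := Jet (jet0 u * jet0 v) (jet0 u * jet1 v + jet1 u * jet0 v)
  (jet0 u * jet2 v + jet1 u * jet1 v + jet2 u * jet0 v).

Lemma jet_addA : associative jet_add.
Proof. by move=> [? ? ?] [? ? ?] [? ? ?]; rewrite /jet_add /jet_mul /=; congr Jet; ring. Qed.
Lemma jet_addC : commutative jet_add.
Proof. by move=> [? ? ?] [? ? ?]; rewrite /jet_add /jet_mul /=; congr Jet; ring. Qed.
Lemma jet_add0 : left_id (Jet 0 0 0) jet_add.
Proof. by move=> [? ? ?]; rewrite /jet_add /jet_mul /=; congr Jet; ring. Qed.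
Lemma jet_addN : left_inverse (Jet 0 0 0) jet_opp jet_add.
Proof. by move=> [? ? ?]; rewrite /jet_add /jet_mul /=; congr Jet; ring. Qed.
HB.instance Definition _ := GRing.isZmodule.Build jet jet_addA jet_addC jet_add0 jet_addN.

Lemma jet_mulA : associative jet_mul.
Proof. by move=> [? ? ?] [? ? ?] [? ? ?]; rewrite /jet_add /jet_mul /=; congr Jet; ring. Qed.
Lemma jet_mulC : commutative jet_mul.
Proof. by move=> [? ? ?] [? ? ?]; rewrite /jet_add /jet_mul /=; congr Jet; ring. Qed.
Lemma jet_mul1 : left_id (Jet 1 0 0) jet_mul.
Proof. by move=> [? ? ?]; rewrite /jet_add /jet_mul /=; congr Jet; ring. Qed.
Lemma jet_mulDl : left_distributive jet_mul jet_add.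
Proof. by move=> [? ? ?] [? ? ?] [? ? ?]; rewrite /jet_add /jet_mul /=; congr Jet; ring. Qed.
Lemma jet1_neq0 : Jet 1 0 0 != Jet 0 0 0.
Proof. by apply/eqP => -[] /eqP; rewrite oner_eq0. Qed.
HB.instance Definition _ :=
  GRing.Zmodule_isComNzRing.Build jet jet_mulA jet_mulC jet_mul1 jet_mulDl jet1_neq0.

Lemma jet_addE u v : u + v = Jet (jet0 u + jet0 v) (jet1 u + jet1 v) (jet2 u + jet2 v).
Proof. by []. Qed.
Lemma jet_oppE u : - u = Jet (- jet0 u) (- jet1 u) (- jet2 u).
Proof. by []. Qed.
Lemma jet_mulE u v : u * v = Jet (jet0 u * jet0 v) (jet0 u * jet1 v + jet1 u * jet0 v)
  (jet0 u * jet2 v + jet1 u * jet1 v + jet2 u * jet0 v).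
Proof. by []. Qed.
Lemma jet_oneE : 1 = Jet 1 0 0. Proof. by []. Qed.
Lemma jet_zeroE : 0 = Jet 0 0 0. Proof. by []. Qed.

Lemma jet0_is_zmod_morphism : zmod_morphism jet0. Proof. by move=> [? ? ?] [? ? ?]. Qed.
HB.instance Definition _ := GRing.isZmodMorphism.Build jet F jet0 jet0_is_zmod_morphism.
Lemma jet0_is_monoid_morphism : monoid_morphism jet0.
Proof. by split => // -[? ? ?] [? ? ?]. Qed.
HB.instance Definition _ := GRing.isMonoidMorphism.Build jet F jet0 jet0_is_monoid_morphism.

Definition jet_const : {rmorphism jet -> F} := jet0.

Lemma mul_jet_linear_neq0 a b c d : (a != 0) || (b != 0) -> (c != 0) || (d != 0) ->
  Jet a b 0 * Jet c d 0 != 0.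
Proof.
move=> hab hcd; rewrite jet_mulE jet_zeroE /=; apply/eqP => -[e0 e1 e2].
rewrite !mulr0 !mul0r addr0 add0r in e2.
have [a0|a0] := eqVneq a 0; have [c0|c0] := eqVneq c 0.
- move: hab hcd e2; rewrite a0 c0 eqxx /= => hb hd /eqP.
  by rewrite mulf_eq0 (negPf hb) (negPf hd).
- move: hab e1; rewrite a0 eqxx mul0r add0r /= => hb /eqP.
  by rewrite mulf_eq0 (negPf hb) (negPf c0).
- move: hcd e1; rewrite c0 eqxx mulr0 addr0 /= => hd /eqP.
  by rewrite mulf_eq0 (negPf a0) (negPf hd).
- by move/eqP: e0; rewrite mulf_eq0 (negPf a0) (negPf c0).
Qed.

(* The lowest nonzero coefficient of [c] kills the constant term of [M]. *)
Lemma jet_const_scale_eq0 n m (c : jet) (M : 'M[jet]_(n, m)) :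
  c != 0 -> c *: M = 0 -> map_mx jet_const M = 0.
Proof.
move=> hc hM; apply/matrixP => i j; rewrite !mxE.
have := congr1 (fun A : 'M[jet]_(n, m) => A i j) hM; rewrite !mxE {hM}.
case: (M i j) => [x0 x1 x2]; case: c hc => c0 c1 c2 hc.
rewrite jet_mulE jet_zeroE /= => -[e0 e1 e2].
have [h0|h0] := eqVneq c0 0; last by move/eqP: e0; rewrite mulf_eq0 (negbTE h0) => /eqP.
have [h1|h1] := eqVneq c1 0; last first.
  by move/eqP: e1; rewrite h0 mul0r add0r mulf_eq0 (negbTE h1) => /eqP.
have h2 : c2 != 0 by apply: contraNneq hc => h2; rewrite h0 h1 h2.
by move/eqP: e2; rewrite h0 h1 !mul0r !add0r mulf_eq0 (negbTE h2) => /eqP.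
Qed.

Lemma jet_const_comm n (c : jet) (A B : 'M[jet]_n) :
  c != 0 -> c *: (A *m B - B *m A) = 0 ->
  map_mx jet_const A *m map_mx jet_const B = map_mx jet_const B *m map_mx jet_const A.
Proof.
move=> hc /(jet_const_scale_eq0 hc); rewrite map_mxB !map_mxM.
by move/eqP; rewrite subr_eq0 => /eqP.
Qed.

Variable N : nat.

Lemma jet_const_comm_HopR (c b q : jet) (y y' : 'I_N -> jet) : c != 0 ->
  c *: (HopR b q y *m HopR b q y' - HopR b q y' *m HopR b q y) = 0 ->
  HopR (jet0 b) (jet0 q) (fun k => jet0 (y k)) *m HopR (jet0 b) (jet0 q) (fun k => jet0 (y' k)) =
  HopR (jet0 b) (jet0 q) (fun k => jet0 (y' k)) *m HopR (jet0 b) (jet0 q) (fun k => jet0 (y k)).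
Proof. by move=> hc /(jet_const_comm hc); rewrite -!(map_HopR jet_const). Qed.

Lemma jet_const_comm_EopR (c b q : jet) (z z' : 'I_N -> jet) : c != 0 ->
  c *: (EopR b q z *m EopR b q z' - EopR b q z' *m EopR b q z) = 0 ->
  EopR (jet0 b) (jet0 q) (fun k => jet0 (z k)) *m EopR (jet0 b) (jet0 q) (fun k => jet0 (z' k)) =
  EopR (jet0 b) (jet0 q) (fun k => jet0 (z' k)) *m EopR (jet0 b) (jet0 q) (fun k => jet0 (z k)).
Proof. by move=> hc /(jet_const_comm hc); rewrite -!(map_EopR jet_const). Qed.

Lemma jet_const_comm_HopR_EopR (c b q : jet) (y z : 'I_N -> jet) : c != 0 ->
  c *: (HopR b q y *m EopR b q z - EopR b q z *m HopR b q y) = 0 ->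
  HopR (jet0 b) (jet0 q) (fun k => jet0 (y k)) *m EopR (jet0 b) (jet0 q) (fun k => jet0 (z k)) =
  EopR (jet0 b) (jet0 q) (fun k => jet0 (z k)) *m HopR (jet0 b) (jet0 q) (fun k => jet0 (y k)).
Proof. by move=> hc /(jet_const_comm hc); rewrite -(map_HopR jet_const) -(map_EopR jet_const). Qed.

End Jets.

Section Commutation.
Variables (F : fieldType) (N : nat) (beta q : F) (t : 'I_N -> F).
Hypothesis ht : forall j, 1 + beta * t j != 0.

Local Notation cst a := (Jet a 0 0).
Local Notation Hop := (Hop beta q t).
Local Notation Eop := (Eop beta q t).

Ltac jet_field := move=> j;
  rewrite !(jet_mulE, jet_addE, jet_oppE, jet_oneE) /=;
  congr Jet; rewrite /ominus /oplus; field; exact: ht.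

Lemma linear_jet_neq0 x : (1 + beta * x != 0) || (beta != 0).
Proof. by have [->|] := eqVneq beta 0; rewrite ?mul0r ?addr0 ?oner_eq0 ?orbT. Qed.

(* Perturb [x, x'] to [x + e, x' + e]: then [lam * mu] is a nonzero jet. *)
Lemma Hop_comm x x' : Hop x *m Hop x' = Hop x' *m Hop x.
Proof.
pose y x j := Jet (ominus beta x (t j)) (1 + beta * t j)^-1 0.
have := @HopR_comm _ N (cst beta) (cst q) (y x) (y x')
  (Jet (1 + beta * x) beta 0) (Jet (1 + beta * x') beta 0) (cst (x' - x))
  (fun j => cst (1 + beta * t j)) ltac:(jet_field) ltac:(jet_field) ltac:(jet_field).
move/jet_const_comm_HopR; apply.
exact: mul_jet_linear_neq0 (linear_jet_neq0 x) (linear_jet_neq0 x').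
Qed.

Lemma Eop_comm x x' : Eop x *m Eop x' = Eop x' *m Eop x.
Proof.
pose z x j := Jet (oplus beta x (t j)) (1 + beta * t j) 0.
have := @EopR_comm _ N (cst beta) (cst q) (z x) (z x')
  (Jet (1 + beta * x) beta 0) (Jet (1 + beta * x') beta 0) (cst (x - x'))
  (fun j => cst (1 + beta * t j)^-1) ltac:(jet_field) ltac:(jet_field) ltac:(jet_field).
move/jet_const_comm_EopR; apply.
exact: mul_jet_linear_neq0 (linear_jet_neq0 x') (linear_jet_neq0 x).
Qed.

Lemma Hop_Eop_comm x x' : Hop x *m Eop x' = Eop x' *m Hop x.
Proof.
pose y j := ominus beta x (t j); pose z j := oplus beta x' (t j).
pose w := oplus beta x x'.
have hw j : w = y j + z j + beta * y j * z j.
  by rewrite /w /y /z /oplus /ominus; field; exact: ht.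
have [hx|hx] := eqVneq (1 + beta * x) 0.
  have hb : beta != 0.
    by apply: contra_eq_neq hx => ->; rewrite mul0r addr0 oner_neq0.
  have hwx : w = x.
    rewrite /w /oplus (_ : x + x' + beta * x * x' = x + x' * (1 + beta * x)); last by ring.
    by rewrite hx mulr0 addr0.
  have hx0 : x != 0.
    by apply: contra_eq_neq hx => ->; rewrite mulr0 addr0 oner_neq0.
  move/eqP: (HopR_EopR_comm q hw).
  by rewrite scaler_eq0 mulf_eq0 (negbTE hb) hwx (negbTE hx0) subr_eq0 => /eqP.
have hy j : 1 + beta * y j != 0.
  rewrite (_ : 1 + beta * y j = (1 + beta * x) / (1 + beta * t j)).
    by rewrite mulf_neq0 ?invr_eq0.
  by rewrite /y /ominus; field; exact: ht.
(* Perturb [beta] to [beta + e] and [w] to [w + e], keeping [y] fixed; the new [z j]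
   is the expansion of [(w + e - y j) / (1 + (beta + e) y j)]. *)
pose z1 j := (1 - z j * y j) / (1 + beta * y j).
pose z2 j := - (z1 j * y j) / (1 + beta * y j).
have hwe j : Jet w 1 0 = cst (y j) + Jet (z j) (z1 j) (z2 j) +
                         Jet beta 1 0 * cst (y j) * Jet (z j) (z1 j) (z2 j).
  rewrite !(jet_mulE, jet_addE) /=; congr Jet; first exact: hw.
    by rewrite /z1; field; exact: hy.
  by rewrite /z2 /z1; field; exact: hy.
move/jet_const_comm_HopR_EopR: (HopR_EopR_comm (cst q) hwe); apply.
by rewrite mul_jet_linear_neq0 // oner_neq0 orbT.
Qed.

End Commutation.

Section CommutingProducts.
Variables (F : fieldType) (N : nat) (T : F -> op F N).
Hypothesis T_comm : forall a b, T a *m T b = T b *m T a.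

Definition prod_seq (l : seq F) : op F N := foldl (fun acc a => T a *m acc) (1%:M : op F N) l.

Lemma foldl_prod_seq l (acc : op F N) : foldl (fun acc a => T a *m acc) acc l = prod_seq l *m acc.
Proof.
elim: l acc => [|a l IH] acc /=; first by rewrite /prod_seq /= mul1mx.
by rewrite /prod_seq /= !IH mulmx1 mulmxA.
Qed.

Lemma prod_seq_cons a l : prod_seq (a :: l) = prod_seq l *m T a.
Proof. by rewrite /prod_seq /= foldl_prod_seq mulmx1. Qed.

Lemma prod_seq_cat l1 l2 : prod_seq (l1 ++ l2) = prod_seq l2 *m prod_seq l1.
Proof. by rewrite /prod_seq foldl_cat foldl_prod_seq. Qed.

Lemma prod_seq_comm a l : T a *m prod_seq l = prod_seq l *m T a.
Proof.
elim: l => [|b l IH]; first by rewrite /prod_seq /= mul1mx mulmx1.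
by rewrite prod_seq_cons mulmxA IH -!mulmxA T_comm.
Qed.

Lemma perm_prod_seq l1 l2 : perm_eq l1 l2 -> prod_seq l1 = prod_seq l2.
Proof.
elim: l1 l2 => [|a l IH] l2 hp; first by move: (perm_size hp) => /esym /size0nil ->.
have ha : a \in l2 by rewrite -(perm_mem hp) mem_head.
case/splitPr: ha hp => l21 l22 hp.
have hp' : perm_eq l (l21 ++ l22).
  by rewrite -(perm_cons a) (perm_trans hp) // -cat1s perm_catCA.
by rewrite prod_seq_cons (IH _ hp') !prod_seq_cat prod_seq_cons -!mulmxA prod_seq_comm.
Qed.

Lemma opprod_perm n (xs : 'I_n -> F) (s : 'S_n) :
  opprod T (fun i => xs (s i)) = opprod T xs.
Proof.
have opprodE (ys : 'I_n -> F) : opprod T ys = prod_seq (map ys (enum 'I_n)).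
  by rewrite /opprod /prod_seq; elim: (enum 'I_n) (1%:M : op F N) => //= i l IH acc.
rewrite !opprodE map_comp; apply/perm_prod_seq/perm_map.
apply: uniq_perm; first by rewrite (map_inj_uniq (@perm_inj _ s)) enum_uniq.
  exact: enum_uniq.
move=> i; rewrite mem_enum; apply/mapP; exists (s^-1 i)%g; first by rewrite mem_enum.
by rewrite permKV.
Qed.

End CommutingProducts.

Theorem mainTheorem4 (F : fieldType) (N : nat) (beta q : F) (t : 'I_N -> F)
  (ht : forall j, 1 + beta * t j != 0) :
  (forall x x' : F,
     Hop beta q t x *m Hop beta q t x' = Hop beta q t x' *m Hop beta q t x /\
     Eop beta q t x *m Eop beta q t x' = Eop beta q t x' *m Eop beta q t x /\
     Hop beta q t x *m Eop beta q t x' = Eop beta q t x' *m Hop beta q t x) /\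
  (forall (n : nat) (xs : 'I_n -> F) (s : 'S_n),
     Zop beta q t (fun i => xs (s i)) = Zop beta q t xs /\
     Zop' beta q t (fun i => xs (s i)) = Zop' beta q t xs).
Proof.
split=> [x x' | n xs s].
  by split; [|split]; [exact: Hop_comm | exact: Eop_comm | exact: Hop_Eop_comm].
by split; apply: opprod_perm; [exact: Hop_comm | exact: Eop_comm].
Qed.
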